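(* Let $\{(Q^{m,n}_{ij})_{i,j\in\mathbb{N}}\}$ be a discrete time Markov process. Suppose there exist $k_0\in\mathbb{N}$ and a sequence $(\lambda_n)$ with $0<\lambda_n<1$ for all $n$, satisfying $\sum_{n}\lambda_n=\infty$ and $\sum_{j=1}^n\frac{\prod_{k=1}^n(1-\lambda_k)}{1-\lambda_j}\to0$ as $n\to\infty$, such that $Q^{n-1,n}_{ik_0}\ge\lambda_n$ for all $i\in\mathbb{N}$ and all $n$ (for which $Q^{n-1,n}$ is defined). Then the Markov process satisfies the ergodic principle, i.e. $\lim_{n\to\infty}|Q^{m,n}_{ik}-Q^{m,n}_{jk}|=0$ for every $i,j,k,m$.
   Context: $\mathbb{N}=\{1,2,\dots\}$. A matrix $(Q_{ij})_{i,j\in\mathbb{N}}$ is stochastic if $Q_{ij}\ge0$ and $\sum_jQ_{ij}=1$ for every $i$. A discrete time Markov process is a family of stochastic matrices $\{(Q^{m,n}_{ij})_{i,j\in\mathbb{N}}\}$ indexed by integer times $m<n$, satisfying the Kolmogorov–Chapman equation $Q^{m,l}_{ij}=\sum_{k=1}^\infty Q^{m,n}_{ik}Q^{n,l}_{kj}$ for all $m<n<l$ and all $i,j$. *)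

From Stdlib Require Import Reals.
From Coquelicot Require Import Coquelicot.
Open Scope R_scope.

(* States: the paper's index set N = {1,2,...} is relabelled as nat = {0,1,...}
   (state i of the paper is state i-1 here).  Times: nonnegative integers. *)

(* A family Q m n i j of matrices indexed by times m < n. *)
Definition process := nat -> nat -> nat -> nat -> R.

Definition stochastic_family (Q : process) : Prop :=
  forall m n, (m < n)%nat ->
    (forall i j, 0 <= Q m n i j) /\ (forall i, is_series (fun j => Q m n i j) 1).

Definition kolmogorov_chapman (Q : process) : Prop :=
  forall m n l, (m < n)%nat -> (n < l)%nat ->
    forall i j, is_series (fun k => Q m n i k * Q n l k j) (Q m l i j).

Definition markov_process (Q : process) : Prop :=
  stochastic_family Q /\ kolmogorov_chapman Q.

Fixpoint prod_1_n (f : nat -> R) (n : nat) : R :=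
  match n with
  | O => 1
  | S n' => prod_1_n f n' * f (S n')
  end.

Definition ergodic_principle (Q : process) : Prop :=
  forall i j k m, is_lim_seq (fun n => Rabs (Q m n i k - Q m n j k)) 0.

From Stdlib Require Import Reals Lra Lia.
From Coquelicot Require Import Coquelicot.
Open Scope R_scope.

(* Doeblin's argument.  Since every row of Q^{n-1,n} puts mass at least
   lambda_n on the state k0, the Kolmogorov-Chapman equation writes each entry
   Q^{n-1,l}_{ik} as lambda_n Q^{n,l}_{k0 k} plus (1 - lambda_n) times an average
   of the Q^{n,l}_{jk}.  Hence the spread of the k-th column of Q^{m,l} over
   the initial states is contracted by 1 - lambda_n at every step, so it is at
   most prod_{t=m+1}^{l-1} (1 - lambda_t) <= exp (- sum_{t=m+1}^{l-1} lambda_t),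
   which tends to 0 because sum lambda_t diverges. *)

Lemma series_nonneg_term_le (g : nat -> R) (s : R) (k : nat) :
  (forall n, 0 <= g n) -> is_series g s -> g k <= s.
Proof.
  intros Hg Hs.
  assert (Hpartial : forall n, sum_n g n <= s).
  { apply growing_ineq.
    - intro n; rewrite sum_Sn; specialize (Hg (S n)).
      change (sum_n g n <= sum_n g n + g (S n)); lra.
    - apply is_lim_seq_Reals; exact Hs. }
  specialize (Hpartial k).
  destruct k as [|k]; [rewrite sum_O in Hpartial; exact Hpartial|].
  rewrite sum_Sn in Hpartial; change (sum_n g k + g (S k) <= s) in Hpartial.
  assert (Hprefix : 0 <= sum_n g k).
  { rewrite <- (sum_n_m_const_zero 0 k : sum_n_m (fun _ => 0) 0 k = 0).
    apply sum_n_m_le; exact Hg. }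
  lra.
Qed.

Lemma series_mixture_bounds (p f : nat -> R) (a c lam s : R) (k0 : nat) :
  (forall l, 0 <= p l) -> is_series p 1 -> (forall l, a <= f l <= a + c) ->
  lam <= p k0 -> is_series (fun l => p l * f l) s ->
  lam * f k0 + (1 - lam) * a <= s <= lam * f k0 + (1 - lam) * (a + c).
Proof.
  intros Hp Hp1 Hf Hlam Hs.
  assert (Hlow : is_series (fun l => p l * (f l - a)) (s - 1 * a)).
  { apply (is_series_ext (fun l => p l * f l - p l * a)); [intro l; simpl; ring|].
    exact (is_series_minus _ _ _ _ Hs (is_series_scal_r a _ _ Hp1)). }
  assert (Hhigh : is_series (fun l => p l * (a + c - f l)) (1 * (a + c) - s)).
  { apply (is_series_ext (fun l => p l * (a + c) - p l * f l)); [intro l; simpl; ring|].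
    exact (is_series_minus _ _ _ _ (is_series_scal_r (a + c) _ _ Hp1) Hs). }
  assert (Hnonneg : forall l, 0 <= f l - a /\ 0 <= a + c - f l)
    by (intro l; specialize (Hf l); lra).
  pose proof (series_nonneg_term_le _ _ k0
    (fun l => Rmult_le_pos _ _ (Hp l) (proj1 (Hnonneg l))) Hlow).
  pose proof (series_nonneg_term_le _ _ k0
    (fun l => Rmult_le_pos _ _ (Hp l) (proj2 (Hnonneg l))) Hhigh).
  destruct (Hnonneg k0).
  split; nra.
Qed.

Definition column_spread_le (Q : process) (m n k : nat) (c : R) : Prop :=
  exists a, forall i, a <= Q m n i k <= a + c.

Lemma column_spread_le_Rabs (Q : process) (m n k : nat) (c : R) :
  column_spread_le Q m n k c -> forall i j, Rabs (Q m n i k - Q m n j k) <= c.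
Proof.
  intros [a Ha] i j.
  pose proof (Ha i); pose proof (Ha j).
  apply Rabs_le; lra.
Qed.

Lemma column_spread_le_1 (Q : process) (m n k : nat) :
  stochastic_family Q -> (m < n)%nat -> column_spread_le Q m n k 1.
Proof.
  intros HQ Hmn.
  destruct (HQ m n Hmn) as [Hnonneg Hrows].
  exists 0; intro i.
  pose proof (series_nonneg_term_le _ _ k (Hnonneg i) (Hrows i)).
  specialize (Hnonneg i k); lra.
Qed.

Lemma column_spread_le_step (Q : process) (m n k k0 : nat) (lam c : R) :
  markov_process Q -> (S m < n)%nat -> (forall i, lam <= Q m (S m) i k0) ->
  column_spread_le Q (S m) n k c -> column_spread_le Q m n k ((1 - lam) * c).
Proof.
  intros [Hstoch Hkc] Hmn Hmin [a Ha].
  destruct (Hstoch m (S m) (Nat.lt_succ_diag_r m)) as [Hnonneg Hrows].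
  exists (lam * Q (S m) n k0 k + (1 - lam) * a); intro i.
  pose proof (series_mixture_bounds _ (fun l => Q (S m) n l k) a c lam _ k0
    (Hnonneg i) (Hrows i) Ha (Hmin i) (Hkc m (S m) n (Nat.lt_succ_diag_r m) Hmn i k)).
  lra.
Qed.

Fixpoint contraction_factor (lam : nat -> R) (m d : nat) : R :=
  match d with
  | O => 1
  | S d' => (1 - lam (S m)) * contraction_factor lam (S m) d'
  end.

Lemma column_spread_le_contraction (Q : process) (k0 k : nat) (lam : nat -> R) :
  markov_process Q -> (forall m i, lam (S m) <= Q m (S m) i k0) ->
  forall d m, column_spread_le Q m (m + 1 + d) k (contraction_factor lam m d).
Proof.
  intros HQ Hmin d; induction d as [|d IH]; intro m.
  - apply column_spread_le_1; [apply HQ | lia].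
  - replace (m + 1 + S d)%nat with (S m + 1 + d)%nat by lia.
    apply (column_spread_le_step Q m _ k k0); [exact HQ | lia | apply Hmin | apply IH].
Qed.

Lemma contraction_factor_bounds (lam : nat -> R) (m d : nat) :
  (forall t, (1 <= t)%nat -> lam t <= 1) ->
  0 <= contraction_factor lam m d <= exp (- sum_n_m lam (S m) (m + d)).
Proof.
  intros Hlam; revert m; induction d as [|d IH]; intro m; simpl.
  - rewrite sum_n_m_zero by lia; change (0 <= 1 <= exp (- 0)).
    rewrite Ropp_0, exp_0; lra.
  - rewrite sum_Sn_m by lia; change (plus ?x ?y) with (x + y).
    replace (m + S d)%nat with (S m + d)%nat by lia.
    rewrite Ropp_plus_distr, exp_plus.
    destruct (IH (S m)) as [Hpos Hle].
    assert (Hstep : 0 <= 1 - lam (S m) <= exp (- lam (S m))).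
    { pose proof (exp_ineq1_le (- lam (S m))); pose proof (Hlam (S m) ltac:(lia)); lra. }
    split; [apply Rmult_le_pos | apply Rmult_le_compat]; lra.
Qed.

Lemma window_sum_divergent (lam : nat -> R) (m : nat) :
  is_lim_seq (fun N => sum_n_m lam 1 N) p_infty ->
  is_lim_seq (fun d => sum_n_m lam (S m) (m + d)) p_infty.
Proof.
  intros Hdiv.
  apply (is_lim_seq_ext (fun d => sum_n_m lam 1 (d + m) - sum_n_m lam 1 m)).
  - intro d; rewrite (sum_n_m_Chasles lam 1 m (d + m)) by lia.
    change (plus ?x ?y) with (x + y); rewrite Nat.add_comm; ring.
  - apply (is_lim_seq_minus _ _ p_infty (sum_n_m lam 1 m)).
    + exact (proj1 (is_lim_seq_incr_n _ m _) Hdiv).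
    + apply is_lim_seq_const.
    + reflexivity.
Qed.

Lemma contraction_factor_lim0 (lam : nat -> R) (m : nat) :
  (forall t, (1 <= t)%nat -> lam t <= 1) ->
  is_lim_seq (fun N => sum_n_m lam 1 N) p_infty ->
  is_lim_seq (contraction_factor lam m) 0.
Proof.
  intros Hlam Hdiv.
  apply (is_lim_seq_le_le (fun _ => 0) _ (fun d => exp (- sum_n_m lam (S m) (m + d)))).
  - intro d; exact (contraction_factor_bounds lam m d Hlam).
  - apply is_lim_seq_const.
  - pose proof (proj1 (is_lim_seq_opp _ _) (window_sum_divergent lam m Hdiv)) as Hopp.
    exact (filterlim_comp _ _ _ _ exp _ _ _ Hopp is_lim_exp_m).
Qed.

Theorem theorem3p3 (Q : process) (k0 : nat) (lambda : nat -> R) :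
  markov_process Q ->
  (forall n, (1 <= n)%nat -> 0 < lambda n < 1) ->
  is_lim_seq (fun N => sum_n_m lambda 1 N) p_infty ->
  is_lim_seq
    (fun n => sum_n_m (fun j => prod_1_n (fun k => 1 - lambda k) n / (1 - lambda j)) 1 n)
    0 ->
  (forall n i, (1 <= n)%nat -> lambda n <= Q (n - 1)%nat n i k0) ->
  ergodic_principle Q.
Proof.
  intros HQ Hlam Hdiv _ Hmin i j k m.
  assert (Hmin' : forall m i, lambda (S m) <= Q m (S m) i k0).
  { intros m' i'; pose proof (Hmin (S m') i' ltac:(lia)) as H.
    rewrite Nat.sub_succ, Nat.sub_0_r in H; exact H. }
  assert (Hle1 : forall t, (1 <= t)%nat -> lambda t <= 1)
    by (intros t Ht; pose proof (Hlam t Ht); lra).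
  apply (is_lim_seq_incr_n _ (S m)).
  apply (is_lim_seq_le_le (fun _ => 0) _ (contraction_factor lambda m)).
  - intro d; split; [apply Rabs_pos|].
    replace (d + S m)%nat with (m + 1 + d)%nat by lia.
    apply column_spread_le_Rabs, (column_spread_le_contraction Q k0); assumption.
  - apply is_lim_seq_const.
  - exact (contraction_factor_lim0 lambda m Hle1 Hdiv).
Qed.
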